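(* Let $n\ge1$, $p=\tfrac12(n+1)$, $N\ge0$ an integer, $a\in\mathbb{C}$, and let $\mu$ be a partition with $\mu\subset(N^n)$ (i.e. $\ell(\mu)\le n$ and $\mu_1\le N$). Define $\hat\mu$ by $\hat\mu_i=N-\mu_{n+1-i}$ ($1\le i\le n$). Then $$(a)_{\hat\mu}\,(-a-N+p)_\mu=(-1)^{|\mu|}\,(a)_{(N^n)}.$$
   Context: For a partition $\lambda$ of length $\le n$, $(a)_\lambda=\prod_{i=1}^n\big(a-\tfrac12(i-1)\big)_{\lambda_i}$, where $(c)_r=c(c+1)\cdots(c+r-1)$. $(N^n)$ is the partition with $n$ parts all equal to $N$. *)

From HB Require Import structures.
From mathcomp Require Import all_boot all_order all_algebra.
From mathcomp Require Import reals complex.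
Set Implicit Arguments. Unset Strict Implicit. Unset Printing Implicit Defensive.
Import Order.TTheory GRing.Theory Num.Theory.
Local Open Scope ring_scope.

Definition rising (F : comRingType) (c : F) (r : nat) : F :=
  \prod_(k < r) (c + k%:R).

(* A partition is a nonincreasing finite sequence of positive integers
   lambda = [:: lambda_1; lambda_2; ...]; lambda_i = nth 0 lambda (i-1),
   with lambda_i = 0 beyond its length. *)
Definition is_partition (lam : seq nat) : bool :=
  sorted geq lam && all (fun x => 0 < x)%N lam.

Definition gpoch (F : fieldType) (n : nat) (a : F) (lam : seq nat) : F :=
  \prod_(i < n) rising (a - i%:R / 2) (nth 0%N lam i).

Definition rect (N n : nat) : seq nat := nseq n N.

(* hat mu_i = N - mu_{n+1-i}, 1 <= i <= n (0-indexed: i |-> N - mu_{n-1-i}) *)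
Definition hatp (N n : nat) (mu : seq nat) : seq nat :=
  mkseq (fun i => N - nth 0 mu (n.-1 - i))%N n.

From mathcomp Require Import all_boot all_order all_algebra.
From mathcomp Require Import reals complex.
From mathcomp Require Import ring zify.
Import Order.TTheory GRing.Theory Num.Theory.
Local Open Scope ring_scope.

(* The identity holds row by row.  Row [i] of [hatp N n mu] pairs with row
   [n - 1 - i] of [mu], whose parameter [-a - N + p - (n - 1 - i)/2] is
   [-b - N + 1] for [b := a - i/2]; with [m := mu_(n-1-i) <= N] it remains
   to see [(b)_(N - m) (-b - N + 1)_m = (-1)^m (b)_N].  Reversing the order
   of the factors turns [(-b - N + 1)_m] into [(-1)^m (b + N - m)_m], the
   missing top segment of [(b)_N]. *)

Section Rising.
Variable F : comRingType.

Lemma risingD (c : F) k m : rising c (k + m) = rising c k * rising (c + k%:R) m.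
Proof.
rewrite /rising big_split_ord /=; congr (_ * _).
by apply: eq_bigr => i _; rewrite natrD addrA.
Qed.

Lemma rising_reflect (c : F) m :
  rising (- c - m%:R + 1) m = (-1) ^+ m * rising c m.
Proof.
rewrite /rising (reindex_inj rev_ord_inj).
rewrite (eq_bigr (fun i : 'I_m => - (c + i%:R))) ?prodrN ?card_ord // => i _ /=.
have -> : m%:R = (m - i.+1)%:R + i%:R + 1 :> F.
  by rewrite -natrD natr1 -addnS subnK.
ring.
Qed.

Lemma rising_complement (b : F) m N : (m <= N)%N ->
  rising b (N - m) * rising (- b - N%:R + 1) m = (-1) ^+ m * rising b N.
Proof.
move=> le_mN; rewrite -{3}(subnK le_mN) risingD -{2}(subnK le_mN) natrD.
have -> : - b - ((N - m)%:R + m%:R) + 1 = - (b + (N - m)%:R) - m%:R + 1 by ring.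
by rewrite rising_reflect mulrCA.
Qed.

End Rising.

Lemma sumn_nth_ord (s : seq nat) n : (size s <= n)%N ->
  sumn s = (\sum_(i < n) nth 0 s i)%N.
Proof.
elim: n s => [|n IHn] [|x s] //= le_sn; rewrite ?big_ord0 //.
  by rewrite big1 // => i _; rewrite nth_nil.
by rewrite big_ord_recl /= (IHn s le_sn).
Qed.

Lemma partition_nth_le_head (mu : seq nat) i :
  is_partition mu -> (nth 0 mu i <= nth 0 mu 0)%N.
Proof.
case/andP=> sorted_mu _; have [lt_i|le_i] := ltnP i (size mu).
  apply: (sorted_leq_nth (rev_trans leq_trans) leqnn) => //; rewrite inE.
  exact: leq_ltn_trans lt_i.
by rewrite nth_default.
Qed.

Theorem mainTheorem9 (R : realType) (n N : nat) (a : R[i]) (mu : seq nat) :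
  (1 <= n)%N ->
  is_partition mu -> (size mu <= n)%N -> (nth 0 mu 0 <= N)%N ->
  let p : R[i] := (n + 1)%:R / 2 in
  gpoch n a (hatp N n mu) * gpoch n (- a - N%:R + p) mu
  = (-1) ^+ (sumn mu) * gpoch n a (rect N n).
Proof.
move=> _ part_mu size_mu mu0_le_N p.
rewrite /gpoch (sumn_nth_ord mu n size_mu) [X in _ ^+ X](reindex_inj rev_ord_inj).
rewrite -prodrXr [X in _ * X = _](reindex_inj rev_ord_inj).
rewrite -!big_split; apply: eq_bigr => i _ /=.
rewrite /hatp /rect nth_mkseq // nth_nseq ltn_ord.
have -> : (n.-1 - i = n - i.+1)%N by lia.
have -> : - a - N%:R + p - (n - i.+1)%:R / 2 = - (a - i%:R / 2) - N%:R + 1.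
  by rewrite /p -[in (n + 1)%:R](subnK (ltn_ord i)) -addn1 !natrD; field.
apply: rising_complement.
exact: leq_trans (partition_nth_le_head _ _ part_mu) mu0_le_N.
Qed.
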